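(* Consider a fair allocation instance with agents $a_1,\dots,a_n$, a finite set $M$ of $m$ indivisible goods, binary XOS valuations $v_1,\dots,v_n$, and entitlements $b_1,\dots,b_n>0$ with $\sum_{i}b_i=1$. Rename the agents so that $\frac{\lceil \mathsf{APS}_1/2\rceil}{b_1}\le \frac{\lceil \mathsf{APS}_2/2\rceil}{b_2}\le\cdots\le\frac{\lceil \mathsf{APS}_n/2\rceil}{b_n}$. Run the following procedure: set $R\gets M$; for $i=1,\dots,n$ in this order, if $v_i(R)\ge\lceil \mathsf{APS}_i/2\rceil$, give $a_i$ a bundle $A_i\subseteq R$ with $v_i(A_i)=|A_i|=\lceil \mathsf{APS}_i/2\rceil$ and set $R\gets R\setminus A_i$ (otherwise the procedure fails); finally allocate the goods remaining in $R$ arbitrarily. Then the procedure never fails, i.e. at every step $i$ such a bundle $A_i$ exists, and the resulting allocation $A$ of $M$ satisfies $v_i(A_i)\ge \frac12\mathsf{APS}_i$ for every agent $a_i$; in particular a $\frac12$-APS allocation always exists.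
   Context: A valuation $v:2^M\to\mathbb{R}_{\ge0}$ is XOS if there is a finite collection of additive functions $\{\ell_t\}_t$ with nonnegative item values such that $v(S)=\max_t\ell_t(S)$ for all $S\subseteq M$. It has binary marginals if $v(\varnothing)=0$ and $v(S\cup\{g\})-v(S)\in\{0,1\}$ for all $S\subseteq M$, $g\in M$; ''binary XOS'' means XOS with binary marginals. An allocation is a partition $(A_1,\dots,A_n)$ of $M$ with $A_i$ given to $a_i$. With $\mathcal{P}=\{p\in\mathbb{R}^m_{\ge0}:\sum_{g\in M}p_g=1\}$ and $p(S)=\sum_{g\in S}p_g$, the AnyPrice share of $a_i$ is $\mathsf{APS}_i=\min_{p\in\mathcal{P}}\max_{S\subseteq M,\ p(S)\le b_i}v_i(S)$. An allocation is $\alpha$-APS if $v_i(A_i)\ge\alpha\,\mathsf{APS}_i$ for all $i$. *)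

From HB Require Import structures.
From mathcomp Require Import all_boot all_order all_algebra.
From mathcomp Require Import reals.
Set Implicit Arguments. Unset Strict Implicit. Unset Printing Implicit Defensive.
Import Order.TTheory GRing.Theory Num.Theory.
Local Open Scope ring_scope.

Section Defs.
Variables (R : realType) (M : finType).

Definition price (p : M -> R) (S : {set M}) : R := \sum_(g in S) p g.

Definition XOS (v : {set M} -> R) : Prop :=
  exists (k : nat) (w : 'I_k -> M -> R),
    [/\ (0 < k)%N, (forall t g, 0 <= w t g) &
        forall S : {set M}, v S = \big[Num.max/0]_(t < k) price (w t) S].

Definition binary_marginals (v : {set M} -> R) : Prop :=
  v set0 = 0 /\
  forall (S : {set M}) (g : M), (v (g |: S) - v S == 0) || (v (g |: S) - v S == 1).

Definition binary_XOS (v : {set M} -> R) : Prop := XOS v /\ binary_marginals v.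

Definition price_vector (p : M -> R) : Prop :=
  (forall g, 0 <= p g) /\ \sum_g p g = 1.

(* max_{S : p(S) <= b} v(S)  (the empty set is always feasible; values >= 0) *)
Definition best_affordable (v : {set M} -> R) (b : R) (p : M -> R) : R :=
  \big[Num.max/0]_(S : {set M} | price p S <= b) v S.

(* AnyPrice share: min over price vectors (rendered as the infimum of the set
   of attained values, which is a minimum here) *)
Definition APS (v : {set M} -> R) (b : R) : R :=
  inf (fun y : R => exists p : M -> R, price_vector p /\ y = best_affordable v b p).

Definition half_aps_ceil (v : {set M} -> R) (b : R) : R :=
  (Num.ceil (APS v b / 2))%:~R.

Definition allocation (n : nat) (A : 'I_n -> {set M}) : Prop :=
  (forall i j : 'I_n, i != j -> [disjoint A i & A j]) /\
  \bigcup_(i < n) A i = [set: M].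

Definition good_bundle (v : {set M} -> R) (c : R) (B : {set M}) : Prop :=
  v B = (#|B|)%:R /\ (#|B|)%:R = c.

End Defs.

(* Write c_i = ceil(APS_i/2). Under binary marginals a set of minimum size among those of
   value at least c_i has value exactly c_i, and an additive clause supporting it gives
   each of its goods weight at least 1, so it is a bundle of c_i goods worth one each.
   When agent k's turn comes, price each good of an earlier bundle A_j at b_j/c_j; these
   prices sum to at most 1 - b_k, so the missing mass can be spread uniformly over all goods.
   By the ordering of the agents every taken good then costs more than b_k/c_k.
   A set affordable with budget b_k thus holds fewer than c_k taken goods, each adding at
   most 1 to v_k; so if the remaining goods were worth less than c_k to agent k, we would
   get APS_k <= 2c_k - 2, contradicting c_k < APS_k/2 + 1. *)

From HB Require Import structures.
From mathcomp Require Import all_boot all_order all_algebra.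
From mathcomp Require Import reals boolp lra.
From mathcomp Require classical_sets.
Import Order.TTheory GRing.Theory Num.Theory.
Local Open Scope ring_scope.
Set Implicit Arguments. Unset Strict Implicit. Unset Printing Implicit Defensive.

Section Valuations.
Variables (R : realType) (M : finType).
Implicit Types (v : {set M} -> R) (p q w : M -> R) (S T B D : {set M}).

Lemma natr_le_subr1 (m c : nat) : (m < c)%N -> m%:R <= c%:R - 1 :> R.
Proof. by move=> mc; rewrite lerBrDr natr1 ler_nat. Qed.

Lemma price_ge0 w S : (forall g, 0 <= w g) -> 0 <= price w S.
Proof. by move=> w0; apply: sumr_ge0. Qed.

Lemma price_subset w S T :
  (forall g, 0 <= w g) -> S \subset T -> price w S <= price w T.
Proof.
move=> w0 sST; rewrite /price [leRHS](big_setID S) /= (setIidPr sST) lerDl.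
exact: price_ge0.
Qed.

Lemma XOS_supporting v S : XOS v ->
  exists w, [/\ forall g, 0 <= w g, price w S = v S & forall T, price w T <= v T].
Proof.
case=> k [w [k0 w0 vE]].
have [t _ tE] := eq_bigmax (Ordinal k0) xpredT (fun t => price (w t) S) isT
  (fun t _ => price_ge0 S (w0 t)).
exists (w t); split => [//||T]; first by rewrite vE tE.
by rewrite vE (bigD1 t) //= le_max lexx.
Qed.

Lemma XOS_ge0 v S : XOS v -> 0 <= v S.
Proof. by move=> /(XOS_supporting S) [w [w0 <- _]]; apply: price_ge0. Qed.

Lemma XOS_monotone v S T : XOS v -> S \subset T -> v S <= v T.
Proof.
move=> /(XOS_supporting S) [w [w0 <- wv]] sST.
exact: le_trans (price_subset w0 sST) (wv T).
Qed.

Lemma XOS_subadditive v S T : XOS v -> v (S :|: T) <= v S + v T.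
Proof.
move=> /(XOS_supporting (S :|: T)) [w [w0 <- wv]].
rewrite /price (big_setID S) /= (setIidPr (subsetUl S T)) lerD ?(wv S) //.
apply: le_trans (wv T); apply: price_subset => //.
by rewrite setDUl setDv set0U subDset subsetUr.
Qed.

Lemma binary_marginals_setU1 v S g : binary_marginals v ->
  v (g |: S) = v S \/ v (g |: S) = v S + 1.
Proof.
case=> _ /(_ S g) /orP[] /eqP dv; [left | right].
  by apply/eqP; rewrite -subr_eq0 dv.
by rewrite -dv addrC subrK.
Qed.

Lemma binary_marginals_natr v S : binary_marginals v ->
  exists2 m : nat, v S = m%:R & (m <= #|S|)%N.
Proof.
move=> vbm; have [k] := ubnP #|S|; elim: k S => // k IH S.
case: (set_0Vmem S) => [-> _|[g gS]]; first by exists 0%N; case: vbm.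
rewrite (cardsD1 g) gS add1n ltnS => /IH[m vS mS].
rewrite -[in v S](setD1K gS); case: (binary_marginals_setU1 (S :\ g) g vbm) => ->.
  by exists m => //; apply: leqW.
by exists m.+1; rewrite ?vS ?natr1.
Qed.

Lemma XOS_card_le_of_critical v B : XOS v ->
  (forall g, g \in B -> v (B :\ g) <= v B - 1) -> #|B|%:R <= v B.
Proof.
move=> /(XOS_supporting B) [w [w0 wB wv]] crit.
rewrite -wB /price -sum1_card natr_sum; apply: ler_sum => g gB.
have := wv (B :\ g); have := crit g gB; rewrite -wB /price (big_setD1 g gB) /=.
lra.
Qed.

Lemma binary_XOS_good_bundle v (c : nat) S : binary_XOS v -> c%:R <= v S ->
  exists2 B : {set M}, B \subset S & good_bundle v c%:R B.
Proof.
move=> [vxos vbm] cS.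
have [|B /andP[sBS cB] Bmin] :=
  @arg_minnP _ S [pred B : {set M} | (B \subset S) && (c%:R <= v B)] (fun B => #|B|).
  by rewrite /= subxx cS.
exists B => //.
have crit g : g \in B -> v (B :\ g) < c%:R.
  move=> gB; rewrite ltNge; apply/negP => cBg.
  have := Bmin (B :\ g); rewrite /= (subset_trans (subD1set B g) sBS) cBg.
  by move=> /(_ isT); rewrite [in X in (X <= _)%N](cardsD1 g B) gB add1n ltnn.
have vBc : v B = c%:R.
  apply/eqP; rewrite eq_le cB andbT.
  case: (set_0Vmem B) => [->|[g gB]]; first by case: vbm => -> _.
  have [m vm _] := binary_marginals_natr (B :\ g) vbm.
  have := crit g gB; rewrite vm ltr_nat => mc.
  rewrite -(setD1K gB).
  by case: (binary_marginals_setU1 (B :\ g) g vbm) => ->; rewrite vm ?natr1 ler_nat // ltnW.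
have [m vm mB] := binary_marginals_natr B vbm.
have vBcard : v B = #|B|%:R.
  apply/eqP; rewrite eq_le {1}vm ler_nat mB /=.
  apply: XOS_card_le_of_critical => // g gB.
  have [m' vm' _] := binary_marginals_natr (B :\ g) vbm.
  by rewrite vBc vm' natr_le_subr1 // -(ltr_nat R) -vm' crit.
by split => //; rewrite -vBcard.
Qed.

Lemma best_affordable_le v b p x :
  0 <= x -> (forall S, price p S <= b -> v S <= x) -> best_affordable v b p <= x.
Proof. exact: bigmax_le. Qed.

Lemma APS_le_best_affordable v b p :
  price_vector p -> APS v b <= best_affordable v b p.
Proof.
move=> pv; apply: ge_inf; last by exists p.
by exists 0 => _ [q [_ ->]]; apply: bigmax_ge_id.
Qed.

Lemma APS_ge0 v b : 0 <= APS v b.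
Proof.
rewrite /APS; set E := (fun y => _).
case: (pselect (classical_sets.has_inf E)) => [[E0 _]|/inf_out -> //].
by apply: lb_le_inf => // _ [p [_ ->]]; apply: bigmax_ge_id.
Qed.

(* Without goods there is no price vector, and [inf] of the empty set is [0]. *)
Lemma APS_gt0_card_gt0 v b : 0 < APS v b -> (0 < #|M|)%N.
Proof.
rewrite lt0n; apply: contraTneq => M0; rewrite /APS inf_out ?ltxx //.
move=> [[_ [p [[_ p1] _]]] _]; move: p1.
rewrite big_pred0 => [/eqP|g]; first by rewrite eq_sym oner_eq0.
by have := card0_eq M0 g; rewrite !inE.
Qed.

Lemma half_aps_ceil_natr v b : exists c : nat, half_aps_ceil v b = c%:R.
Proof.
have : 0 <= Num.ceil (APS v b / 2).
  by rewrite ceil_ge0 (lt_le_trans (ltrN10 R)) // divr_ge0 ?APS_ge0.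
by rewrite /half_aps_ceil; case: (Num.ceil _) => // c _; exists c.
Qed.

Lemma half_aps_ceil_subr1_lt v b : half_aps_ceil v b - 1 < APS v b / 2.
Proof. by rewrite /half_aps_ceil -[1]/(1%:~R) -intrB ceilB1_lt. Qed.

Lemma APS_half_le_good_bundle v b B S : XOS v ->
  good_bundle v (half_aps_ceil v b) B -> B \subset S -> APS v b / 2 <= v S.
Proof.
move=> vxos [vB cB] sBS; apply: le_trans (ceil_ge _) _.
by rewrite -[X in X <= _]/(half_aps_ceil v b) -cB -vB XOS_monotone.
Qed.

Lemma price_vector_above q : (0 < #|M|)%N ->
  (forall g, 0 <= q g) -> \sum_g q g < 1 ->
  exists p, price_vector p /\ forall g, q g < p g.
Proof.
move=> M0 q0 q1; set s := (1 - \sum_g q g) / #|M|%:R.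
have s0 : 0 < s by rewrite divr_gt0 ?subr_gt0 ?ltr0n.
exists (fun g => q g + s); split => [|g]; last by rewrite ltrDl.
split=> [g|]; first exact: addr_ge0 (q0 g) (ltW s0).
rewrite big_split /= sumr_const -[#|_|]/#|M| -(mulr_natr s) divfK ?pnatr_eq0 -?lt0n //.
by rewrite addrC subrK.
Qed.

Lemma APS_le_of_expensive_goods v b (c : nat) D p :
  binary_XOS v -> 0 < b -> (0 < c)%N -> price_vector p ->
  (forall g, g \in D -> b / c%:R < p g) -> APS v b <= c%:R - 1 + v (~: D).
Proof.
move=> [vxos vbm] b0 c0 pv pD; have [p0 _] := pv.
apply: le_trans (APS_le_best_affordable v b pv) _.
apply: best_affordable_le => [|S pS].
  by rewrite addr_ge0 ?XOS_ge0 // subr_ge0 ler1n.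
have SD_lt_c : (#|S :&: D| < c)%N.
  rewrite ltnNge; apply/negP => cSD.
  have [g gSD] : exists g, g \in S :&: D by apply/card_gt0P; apply: leq_trans cSD.
  have : b <= b / c%:R *+ #|S :&: D|.
    by rewrite -mulr_natr mulrAC ler_pdivlMr ?ltr0n // ler_pM2l // ler_nat.
  rewrite leNgt => /negP; apply; rewrite -sumr_const; apply: lt_le_trans pS.
  apply: lt_le_trans (price_subset p0 (subsetIl S D)).
  by apply: ltr_sum => [|h /setIP[_ /pD]] //; apply/hasP; exists g; rewrite ?mem_index_enum.
apply: le_trans (XOS_monotone vxos (_ : S \subset (S :&: D) :|: (S :&: ~: D))) _.
  by rewrite -setIUr setUCr setIT.
apply: le_trans (XOS_subadditive _ _ vxos) _; apply: lerD.
  have [m -> mSD] := binary_marginals_natr (S :&: D) vbm.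
  exact: natr_le_subr1 (leq_ltn_trans mSD SD_lt_c).
exact/XOS_monotone/subsetIr.
Qed.

Lemma APS_le_of_weighted_bundles (I : finType) (J : pred I) (A : I -> {set M}) (w : I -> R)
    v b (c : nat) :
  binary_XOS v -> 0 < b -> (0 < c)%N -> (0 < #|M|)%N ->
  (forall j, J j -> 0 < w j) -> (forall j, J j -> #|A j|%:R / w j <= c%:R / b) ->
  \sum_(j | J j) w j < 1 ->
  APS v b <= c%:R - 1 + v (~: \bigcup_(j | J j) A j).
Proof.
move=> vbx b0 c0 M0 w0 Aw w1.
have share0 j : J j -> 0 <= w j / #|A j|%:R by move=> /w0/ltW w0j; rewrite divr_ge0.
pose q g := \sum_(j | J j && (g \in A j)) w j / #|A j|%:R.
have q0 g : 0 <= q g by apply: sumr_ge0 => j /andP[/share0].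
have q1 : \sum_g q g < 1.
  apply: le_lt_trans w1; rewrite (exchange_big_dep J) /= => [|g j _ /andP[] //].
  apply: ler_sum => j Jj.
  rewrite (eq_bigl (mem (A j))) => [|g]; last by rewrite /= Jj.
  rewrite sumr_const -(mulr_natr (w j / _)); have [->|Aj0] := eqVneq #|A j| 0%N.
    by rewrite mulr0 ltW ?w0.
  by rewrite divfK ?pnatr_eq0.
have qD g : g \in \bigcup_(j | J j) A j -> b / c%:R <= q g.
  case/bigcupP=> j Jj gA; apply: le_trans (_ : w j / #|A j|%:R <= _).
    have Aj0 : 0 < #|A j|%:R :> R by rewrite ltr0n card_gt0; apply/set0Pn; exists g.
    rewrite -[b / _]invf_div -[w j / _]invf_div lef_pV2 ?Aw // posrE.
      by apply: divr_gt0; rewrite ?ltr0n.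
    by apply: divr_gt0; rewrite ?w0.
  by rewrite /q (bigD1 j) /= ?Jj ?gA // lerDl sumr_ge0 // => i /andP[/andP[/share0]].
have [p [pv qp]] := price_vector_above M0 q0 q1.
by apply: APS_le_of_expensive_goods pv _ => // g /qD/le_lt_trans; apply.
Qed.

End Valuations.

Section Greedy.
Variables (M : finType) (n : nat).

Lemma greedy_disjoint_family (good : 'I_n -> {set M} -> Prop) :
  (forall (k : 'I_n) (A : 'I_n -> {set M}),
     (forall j : 'I_n, (j < k)%N -> good j (A j)) ->
     (forall j1 j2 : 'I_n, (j1 < k)%N -> (j2 < k)%N -> j1 != j2 ->
        [disjoint A j1 & A j2]) ->
     exists2 B : {set M}, B \subset ~: \bigcup_(j < n | (j < k)%N) A j & good k B) ->
  exists A : 'I_n -> {set M},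
    (forall j, good j (A j)) /\ (forall j1 j2, j1 != j2 -> [disjoint A j1 & A j2]).
Proof.
move=> extend.
suff /(_ n (leqnn n)) [A [Agood Adisj]] : forall k, (k <= n)%N ->
    exists A : 'I_n -> {set M},
      (forall j : 'I_n, (j < k)%N -> good j (A j)) /\
      (forall j1 j2 : 'I_n, (j1 < k)%N -> (j2 < k)%N -> j1 != j2 -> [disjoint A j1 & A j2]).
  by exists A; split => [j|j1 j2]; [apply: Agood | apply: Adisj].
elim=> [_|k IH kn]; first by exists (fun=> set0).
have [A [Agood Adisj]] := IH (ltnW kn).
have [B BA Bgood] := extend (Ordinal kn) A Agood Adisj.
have old (j : 'I_n) : (j < k.+1)%N -> val j != k -> (j < k)%N.
  by rewrite ltnS ltn_neqAle => jk ->.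
have BAj (j : 'I_n) : (j < k)%N -> [disjoint B & A j].
  by move=> jk; rewrite disjoints_subset (subset_trans BA) // setCS (bigcup_sup j).
exists (fun j => if val j == k then B else A j); split => [j jk|j1 j2 j1k j2k j12].
  case: eqP => [jE|/eqP jk']; last exact/Agood/old.
  by have -> : j = Ordinal kn by apply: val_inj.
case: eqP => [j1E|/eqP j1k']; case: eqP => [j2E|/eqP j2k'].
- by case/eqP: j12; apply: val_inj; rewrite /= j1E j2E.
- exact/BAj/old.
- by rewrite disjoint_sym; apply/BAj/old.
- exact: Adisj (old _ _ _) (old _ _ _) j12.
Qed.

Lemma disjoint_family_allocation (i0 : 'I_n) (B : 'I_n -> {set M}) :
  (forall j1 j2, j1 != j2 -> [disjoint B j1 & B j2]) ->
  exists A, allocation A /\ forall j, B j \subset A j.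
Proof.
move=> Bdisj; set U := \bigcup_j B j.
pose A j := if j == i0 then B j :|: ~: U else B j.
have BA j : B j \subset A j by rewrite /A; case: eqP => // _; apply: subsetUl.
exists A; split => //; split => [j1 j2|].
  wlog j2i0 : j1 j2 / j2 != i0 => [sym j12|j12].
    have [j2E|j2i0] := eqVneq j2 i0; last exact: sym j2i0 j12.
    by rewrite disjoint_sym; apply: sym; [rewrite -j2E | rewrite eq_sym].
  rewrite /A (negbTE j2i0); case: eqP => _; last exact: Bdisj.
  by rewrite disjoints_subset subUset setCS -disjoints_subset Bdisj //= (bigcup_sup j2).
apply/setP => g; rewrite inE; apply/bigcupP.
have [/bigcupP[j _ gB]|gU] := boolP (g \in U); first by exists j => //; apply: subsetP (BA j) _ gB.
by exists i0 => //; rewrite /A eqxx !inE gU orbT.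
Qed.

End Greedy.

Section Procedure.
Variables (R : realType) (M : finType) (n : nat).
Variables (v : 'I_n -> {set M} -> R) (b : 'I_n -> R).
Hypotheses (vbx : forall i, binary_XOS (v i)) (b0 : forall i, 0 < b i).
Hypothesis b1 : \sum_(i < n) b i = 1.
Hypothesis ordered : forall i j : 'I_n, (i <= j)%N ->
  half_aps_ceil (v i) (b i) / b i <= half_aps_ceil (v j) (b j) / b j.

Lemma agents_gt0 : (0 < n)%N.
Proof.
case: (posnP n) b1 => // n0; rewrite big_pred0 => [/eqP|[i]]; first by rewrite eq_sym oner_eq0.
by rewrite n0.
Qed.

Lemma half_aps_ceil_le_remaining (k : 'I_n) (A : 'I_n -> {set M}) :
  (forall j : 'I_n, (j < k)%N -> good_bundle (v j) (half_aps_ceil (v j) (b j)) (A j)) ->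
  half_aps_ceil (v k) (b k) <= v k (~: \bigcup_(j < n | (j < k)%N) A j).
Proof.
move=> Agood; have APS_gt := half_aps_ceil_subr1_lt (v k) (b k).
have [c cE] := half_aps_ceil_natr (v k) (b k); rewrite cE in APS_gt *.
have [m vm _] := binary_marginals_natr (~: \bigcup_(j < n | (j < k)%N) A j) (vbx k).2.
rewrite vm ler_nat leqNgt; apply/negP => mc.
have c0 : (0 < c)%N := leq_ltn_trans (leq0n m) mc.
have APS0 : 0 < APS (v k) (b k).
  by have := @natr_le_subr1 R _ _ c0; lra.
have earlier_lt1 : \sum_(j < n | (j < k)%N) b j < 1.
  rewrite -b1 [ltRHS](bigID (fun j : 'I_n => (j < k)%N)) /= ltrDl (bigD1 k) ?ltnn //=.
  by apply: ltr_wpDr (b0 k); apply: sumr_ge0 => i _; apply: ltW.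
have APS_le : APS (v k) (b k) <= c%:R - 1 + m%:R.
  rewrite -vm; apply: (APS_le_of_weighted_bundles (w := b)) => //.
  - exact: APS_gt0_card_gt0 APS0.
  - by move=> j jk; have [_ ->] := Agood j jk; rewrite -cE; exact/ordered/ltnW.
by have := @natr_le_subr1 R _ _ mc; lra.
Qed.

Lemma good_bundle_in_remaining (k : 'I_n) (A : 'I_n -> {set M}) :
  (forall j : 'I_n, (j < k)%N -> good_bundle (v j) (half_aps_ceil (v j) (b j)) (A j)) ->
  exists2 B : {set M}, B \subset ~: \bigcup_(j < n | (j < k)%N) A j &
    good_bundle (v k) (half_aps_ceil (v k) (b k)) B.
Proof.
move=> /half_aps_ceil_le_remaining; have [c ->] := half_aps_ceil_natr (v k) (b k).
exact: binary_XOS_good_bundle.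
Qed.

Lemma exists_half_APS_allocation :
  exists A, allocation A /\ forall i, APS (v i) (b i) / 2 <= v i (A i).
Proof.
have [B [Bgood Bdisj]] :=
  greedy_disjoint_family (fun k A Agood _ => good_bundle_in_remaining Agood).
have [A [Aalloc BA]] := disjoint_family_allocation (Ordinal agents_gt0) Bdisj.
by exists A; split => // i; apply: APS_half_le_good_bundle (vbx i).1 (Bgood i) (BA i).
Qed.

End Procedure.

Theorem theorem1 (R : realType) (M : finType) (n : nat)
    (v : 'I_n -> {set M} -> R) (b : 'I_n -> R) :
  (forall i, binary_XOS (v i)) ->
  (forall i, 0 < b i) ->
  \sum_(i < n) b i = 1 ->
  (* agents are renamed so that ceil(APS_i/2)/b_i is nondecreasing *)
  (forall i j : 'I_n, (i <= j)%N ->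
     half_aps_ceil (v i) (b i) / b i <= half_aps_ceil (v j) (b j) / b j) ->
  (* (1) the procedure never fails: whatever bundles A_1..A_{k-1} were given
     at the earlier steps, at step k the remaining goods R satisfy
     v_k(R) >= ceil(APS_k/2) and a bundle A_k of R with
     v_k(A_k) = |A_k| = ceil(APS_k/2) exists *)
  (forall (k : 'I_n) (A : 'I_n -> {set M}),
     (forall j : 'I_n, (j < k)%N -> good_bundle (v j) (half_aps_ceil (v j) (b j)) (A j)) ->
     (forall j1 j2 : 'I_n, (j1 < k)%N -> (j2 < k)%N -> j1 != j2 ->
        [disjoint A j1 & A j2]) ->
     let Rem := ~: \bigcup_(j < n | (j < k)%N) A j in
     half_aps_ceil (v k) (b k) <= v k Rem /\
     exists B : {set M}, B \subset Rem /\
       good_bundle (v k) (half_aps_ceil (v k) (b k)) B) /\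
  (* (2) every final allocation produced by the procedure (bundles B_i,
     plus the remaining goods allocated arbitrarily) is 1/2-APS *)
  (forall (B A : 'I_n -> {set M}),
     (forall i, good_bundle (v i) (half_aps_ceil (v i) (b i)) (B i)) ->
     (forall i, B i \subset A i) ->
     allocation A ->
     forall i, v i (A i) >= APS (v i) (b i) / 2) /\
  (* (3) in particular a 1/2-APS allocation exists *)
  (exists A : 'I_n -> {set M}, allocation A /\
     forall i, v i (A i) >= 1 / 2 * APS (v i) (b i)).
Proof.
move=> vbx b0 b1 ordered; split; [|split].
- move=> k A Agood _ /=; split; first exact: half_aps_ceil_le_remaining.
  by have [B ? ?] := good_bundle_in_remaining vbx b0 b1 ordered Agood; exists B.
- by move=> B A Bgood BA _ i; apply: APS_half_le_good_bundle (vbx i).1 (Bgood i) (BA i).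
- have [A [Aalloc AAPS]] := exists_half_APS_allocation vbx b0 b1 ordered.
  by exists A; split => // i; rewrite mul1r mulrC.
Qed.
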